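(* Let $n\ge 2$ and let $k_1,\dots,k_n$ be positive integers with $\sum_{i=1}^n \frac{1}{k_i}=1$. Let $k=\operatorname{lcm}(k_1,\dots,k_n)$ and $w_i=k/k_i$ (so $\sum_i w_i=k$). Then for every real $x\in[\frac1k,1)$, $$\lfloor kx\rfloor-\sum_{i=1}^n\lfloor w_i x\rfloor\ \ge\ 1 .$$
   Context: $\lfloor y\rfloor$ denotes the integer part (floor) of a real number $y$. *)

From Stdlib Require Import Reals ZArith Arith Lia Lra.
Open Scope R_scope.

(* floor of a real: Int_part r = up r - 1 is the greatest integer <= r *)
Definition floorR (y : R) : Z := Int_part y.

Fixpoint lcm_upto (k : nat -> nat) (n : nat) : nat :=
  match n with
  | O => 1%nat
  | S m => Nat.lcm (lcm_upto k m) (k m)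
  end.

Fixpoint zsum_upto (f : nat -> Z) (n : nat) : Z :=
  match n with
  | O => 0%Z
  | S m => (zsum_upto f m + f m)%Z
  end.

Fixpoint rsum_upto (f : nat -> R) (n : nat) : R :=
  match n with
  | O => 0
  | S m => rsum_upto f m + f m
  end.

From Stdlib Require Import Reals ZArith Arith Lia Lra Classical.
Open Scope R_scope.

(* Write m = floor (K x), so 1 <= m < K.  Since k_i divides K,
   floor (w_i x) = floor ((K x) / k_i) = floor (m / k_i), and
   sum_i floor (m / k_i) <= sum_i m / k_i = m.  Equality would force every
   k_i, hence K = lcm k_i, to divide m, which is impossible for 0 < m < K. *)

Lemma floorR_unique (y : R) (z : Z) : IZR z <= y -> y < IZR z + 1 -> floorR y = z.
Proof.
  intros Hle Hlt. unfold floorR, Int_part.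
  assert (Hup : (z + 1)%Z = up y) by (apply tech_up; rewrite plus_IZR; lra).
  lia.
Qed.

Lemma floorR_le (y : R) : IZR (floorR y) <= y.
Proof.
  unfold floorR, Int_part. destruct (archimed y). rewrite minus_IZR. lra.
Qed.

Lemma floorR_lt (y : R) : y < IZR (floorR y) + 1.
Proof.
  unfold floorR, Int_part. destruct (archimed y). rewrite minus_IZR. lra.
Qed.

Lemma floorR_range (y : R) (z : Z) : 1 <= y -> y < IZR z -> (1 <= floorR y < z)%Z.
Proof.
  intros Hlo Hhi. pose proof (floorR_le y). pose proof (floorR_lt y).
  split.
  - assert (Hpos : 0 < IZR (floorR y)) by lra. apply lt_IZR in Hpos. lia.
  - apply lt_IZR. lra.
Qed.

Lemma floorR_div (y : R) (d : Z) : (0 < d)%Z -> floorR (y / IZR d) = (floorR y / d)%Z.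
Proof.
  intros Hd.
  set (q := (floorR y / d)%Z).
  assert (Hdiv : floorR y = (d * q + floorR y mod d)%Z) by (apply Z.div_mod; lia).
  pose proof (Z.mod_pos_bound (floorR y) d Hd).
  assert (Hlo : (d * q <= floorR y)%Z) by lia.
  assert (Hhi : (floorR y + 1 <= d * (q + 1))%Z) by lia.
  apply IZR_le in Hlo. apply IZR_le in Hhi.
  rewrite mult_IZR in Hlo. rewrite plus_IZR, mult_IZR, plus_IZR in Hhi.
  pose proof (floorR_le y). pose proof (floorR_lt y).
  assert (Hdr : 0 < IZR d) by (apply IZR_lt; exact Hd).
  apply floorR_unique.
  - apply Rmult_le_reg_l with (IZR d); [exact Hdr|].
    field_simplify; [lra | lra].
  - apply Rmult_lt_reg_l with (IZR d); [exact Hdr|].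
    field_simplify; [lra | lra].
Qed.

Lemma INR_div_exact (a d : nat) :
  (0 < d)%nat -> Nat.divide d a -> INR (a / d) = INR a / INR d.
Proof.
  intros Hd [c ->]. rewrite Nat.div_mul by lia. rewrite mult_INR.
  field. apply not_0_INR. lia.
Qed.

Lemma INR_div_le (m d : nat) : (0 < d)%nat -> INR (m / d) <= INR m / INR d.
Proof.
  intros Hd. assert (Hdr : 0 < INR d) by (apply lt_0_INR; exact Hd).
  pose proof (Nat.Div0.mul_div_le m d) as Hle. apply le_INR in Hle.
  rewrite mult_INR in Hle.
  apply Rmult_le_reg_l with (INR d); [exact Hdr|]. field_simplify; lra.
Qed.

Lemma INR_div_lt (m d : nat) :
  (0 < d)%nat -> ~ Nat.divide d m -> INR (m / d) < INR m / INR d.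
Proof.
  intros Hd Hnd. assert (Hdr : 0 < INR d) by (apply lt_0_INR; exact Hd).
  assert (Hlt : (d * (m / d) < m)%nat).
  { pose proof (Nat.Div0.mul_div_le m d).
    enough (d * (m / d) <> m)%nat by lia.
    intros E. apply Hnd. exists (m / d)%nat. lia. }
  apply lt_INR in Hlt. rewrite mult_INR in Hlt.
  apply Rmult_lt_reg_l with (INR d); [exact Hdr|]. field_simplify; lra.
Qed.

Lemma zsum_upto_ext (f g : nat -> Z) (n : nat) :
  (forall i, (i < n)%nat -> f i = g i) -> zsum_upto f n = zsum_upto g n.
Proof.
  induction n as [|n IH]; simpl; intros Hfg; [reflexivity|].
  rewrite IH by (intros; apply Hfg; lia). rewrite Hfg by lia. reflexivity.
Qed.

Lemma IZR_zsum_upto (f : nat -> Z) (n : nat) :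
  IZR (zsum_upto f n) = rsum_upto (fun i => IZR (f i)) n.
Proof. induction n as [|n IH]; simpl; [reflexivity|]. rewrite plus_IZR, IH. reflexivity. Qed.

Lemma rsum_upto_scal (c : R) (f : nat -> R) (n : nat) :
  rsum_upto (fun i => c * f i) n = c * rsum_upto f n.
Proof. induction n as [|n IH]; simpl; [ring|]. rewrite IH. ring. Qed.

Lemma rsum_upto_le (f g : nat -> R) (n : nat) :
  (forall i, (i < n)%nat -> f i <= g i) -> rsum_upto f n <= rsum_upto g n.
Proof.
  induction n as [|n IH]; simpl; intros Hfg; [lra|].
  assert (f n <= g n) by (apply Hfg; lia).
  assert (rsum_upto f n <= rsum_upto g n) by (apply IH; intros; apply Hfg; lia).
  lra.
Qed.

Lemma rsum_upto_lt (f g : nat -> R) (n j : nat) :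
  (forall i, (i < n)%nat -> f i <= g i) -> (j < n)%nat -> f j < g j ->
  rsum_upto f n < rsum_upto g n.
Proof.
  induction n as [|n IH]; simpl; intros Hfg Hj Hlt; [lia|].
  destruct (Nat.eq_dec j n) as [->|Hne].
  - assert (rsum_upto f n <= rsum_upto g n) by (apply rsum_upto_le; intros; apply Hfg; lia).
    lra.
  - assert (f n <= g n) by (apply Hfg; lia).
    assert (rsum_upto f n < rsum_upto g n).
    { apply IH; [intros; apply Hfg; lia | lia | exact Hlt]. }
    lra.
Qed.

Lemma lcm_upto_pos (k : nat -> nat) (n : nat) :
  (forall i, (i < n)%nat -> (0 < k i)%nat) -> (0 < lcm_upto k n)%nat.
Proof.
  induction n as [|n IH]; simpl; intros Hpos; [lia|].
  assert (0 < lcm_upto k n)%nat by (apply IH; intros; apply Hpos; lia).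
  assert (0 < k n)%nat by (apply Hpos; lia).
  enough (Nat.lcm (lcm_upto k n) (k n) <> 0)%nat by lia.
  intros [E | E]%Nat.lcm_eq_0; lia.
Qed.

Lemma divide_lcm_upto (k : nat -> nat) (n i : nat) :
  (i < n)%nat -> Nat.divide (k i) (lcm_upto k n).
Proof.
  induction n as [|n IH]; simpl; intros Hi; [lia|].
  destruct (Nat.eq_dec i n) as [->|Hne].
  - apply Nat.divide_lcm_r.
  - apply Nat.divide_trans with (lcm_upto k n); [apply IH; lia | apply Nat.divide_lcm_l].
Qed.

Lemma lcm_upto_least (k : nat -> nat) (n m : nat) :
  (forall i, (i < n)%nat -> Nat.divide (k i) m) -> Nat.divide (lcm_upto k n) m.
Proof.
  induction n as [|n IH]; simpl; intros Hdiv; [apply Nat.divide_1_l|].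
  apply Nat.lcm_least; [apply IH; intros|]; apply Hdiv; lia.
Qed.

Lemma not_divide_lcm_upto (k : nat -> nat) (n m : nat) :
  ~ Nat.divide (lcm_upto k n) m -> exists i, (i < n)%nat /\ ~ Nat.divide (k i) m.
Proof.
  intros Hnd. apply NNPP. intros Hall. apply Hnd, lcm_upto_least.
  intros i Hi. apply NNPP. intros Hni. apply Hall. exists i. auto.
Qed.

Lemma zsum_div_lt (n m : nat) (k : nat -> nat)
  (hpos : forall i, (i < n)%nat -> (0 < k i)%nat)
  (hsum : rsum_upto (fun i => / INR (k i)) n = 1) :
  ~ Nat.divide (lcm_upto k n) m ->
  (zsum_upto (fun i => Z.of_nat (m / k i)) n < Z.of_nat m)%Z.
Proof.
  intros Hnd. destruct (not_divide_lcm_upto k n m Hnd) as [j [Hj Hndj]].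
  apply lt_IZR. rewrite IZR_zsum_upto, <- INR_IZR_INZ.
  replace (INR m) with (rsum_upto (fun i => INR m / INR (k i)) n)
    by (unfold Rdiv; rewrite rsum_upto_scal, hsum; ring).
  apply rsum_upto_lt with j.
  - intros i Hi. rewrite <- INR_IZR_INZ. apply INR_div_le, hpos, Hi.
  - exact Hj.
  - rewrite <- INR_IZR_INZ. apply INR_div_lt; [apply hpos, Hj | exact Hndj].
Qed.

Theorem mainTheorem2 (n : nat) (k : nat -> nat)
  (hn : (2 <= n)%nat)
  (hpos : forall i, (i < n)%nat -> (0 < k i)%nat)
  (hsum : rsum_upto (fun i => / INR (k i)) n = 1) :
  let K := lcm_upto k n in
  forall x : R, / INR K <= x -> x < 1 ->
  (floorR (INR K * x)
     - zsum_upto (fun i => floorR (INR (K / k i) * x)) n >= 1)%Z.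
Proof.
  intros K x Hlo Hhi.
  assert (HK : (0 < K)%nat) by (apply lcm_upto_pos, hpos).
  assert (HKr : 0 < INR K) by (apply lt_0_INR, HK).
  assert (Hrange : (1 <= floorR (INR K * x) < Z.of_nat K)%Z).
  { apply floorR_range; rewrite <- ?INR_IZR_INZ.
    - apply Rmult_le_compat_l with (r := INR K) in Hlo; [|lra].
      rewrite Rinv_r in Hlo; lra.
    - rewrite <- (Rmult_1_r (INR K)) at 2. apply Rmult_lt_compat_l; lra. }
  set (m := Z.to_nat (floorR (INR K * x))).
  assert (Hm : floorR (INR K * x) = Z.of_nat m) by (unfold m; lia).
  assert (Hfloors : forall i, (i < n)%nat ->
            floorR (INR (K / k i) * x) = Z.of_nat (m / k i)).
  { intros i Hi.
    rewrite INR_div_exact by (apply hpos, Hi || apply divide_lcm_upto, Hi).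
    replace (INR K / INR (k i) * x) with (INR K * x / IZR (Z.of_nat (k i)))
      by (rewrite <- INR_IZR_INZ; field; apply not_0_INR; specialize (hpos i Hi); lia).
    rewrite floorR_div, Hm, Nat2Z.inj_div by (specialize (hpos i Hi); lia).
    reflexivity. }
  rewrite (zsum_upto_ext _ _ n Hfloors), Hm.
  assert (Hnd : ~ Nat.divide K m).
  { intros Hd. apply Nat.divide_pos_le in Hd; lia. }
  pose proof (zsum_div_lt n m k hpos hsum Hnd). lia.
Qed.
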